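(* Let $X$ be a convex subset of $\mathbb{R}^n$, $f=(f_1,\ldots,f_m):X\to\mathbb{R}^m$ a convex mapping, and $g_1,\ldots,g_\ell:X\to\mathbb{R}$ convex functions ($\ell\ge1$). Let $\Omega=\{x\in X: g_1(x)\le0,\ldots,g_\ell(x)\le0\}$. Then the following are equivalent: $(\alpha)$ $\mathrm{WE}(f|_\Omega,\Omega)=\mathrm{E}(f|_\Omega,\Omega)$; $(\beta)$ $\displaystyle\bigcup_{\emptyset\neq I\subseteq M}\mathrm{E}((f|_\Omega)_I,\Omega)\subseteq\mathrm{E}(f|_\Omega,\Omega)$, where $M=\{1,\ldots,m\}$.
   Context: A mapping $f=(f_1,\ldots,f_m)$ on a convex set is convex if each $f_i$ is a convex function. Let $M=\{1,\ldots,m\}$. For a nonempty $I\subseteq M$ and $y,y'\in\mathbb{R}^m$: $y\lneq_I y'$ means $y_i\leq y'_i$ for all $i\in I$ and $y_j<y'_j$ for some $j\in I$; $y<_I y'$ means $y_i<y'_i$ for all $i\in I$. For $Y\subseteq\mathbb{R}^m$, $\mathrm{M}_I Y$ (resp. $\mathrm{WM}_I Y$) is the set of all $y'\in Y$ for which there is no $y\in Y$ with $y\lneq_I y'$ (resp. $y<_I y'$). For a mapping $h=(h_1,\ldots,h_m):Z\to\mathbb{R}^m$ and $I=\{i_1<\cdots<i_k\}$, $h_I=(h_{i_1},\ldots,h_{i_k})$, $\mathrm{E}(h_I,Z)=h^{-1}(\mathrm{M}_I h(Z))$, $\mathrm{WE}(h_I,Z)=h^{-1}(\mathrm{WM}_I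 h(Z))$; $\mathrm{E}(h,Z)=\mathrm{E}(h_M,Z)$, $\mathrm{WE}(h,Z)=\mathrm{WE}(h_M,Z)$. $f|_\Omega$ denotes the restriction of $f$ to $\Omega$. *)

(* A point of R^n is encoded as x : nat -> R whose coordinates i >= n vanish
   (see [in_Rn]); every X considered is required to lie inside this copy of R^n.
   A mapping f = (f_1,...,f_m) : X -> R^m is encoded as f : (nat -> R) -> nat -> R,
   with components indexed by i = 0..m-1 (only those are ever used). *)
From Stdlib Require Import Reals.
Open Scope R_scope.

Definition in_Rn (n : nat) (x : nat -> R) : Prop := forall i, (n <= i)%nat -> x i = 0.

Definition comb (t : R) (x y : nat -> R) : nat -> R := fun i => t * x i + (1 - t) * y i.

Definition convex_set (X : (nat -> R) -> Prop) : Prop :=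
  forall x y t, X x -> X y -> 0 <= t -> t <= 1 -> X (comb t x y).

Definition convex_fun (X : (nat -> R) -> Prop) (h : (nat -> R) -> R) : Prop :=
  forall x y t, X x -> X y -> 0 <= t -> t <= 1 ->
    h (comb t x y) <= t * h x + (1 - t) * h y.

Definition convex_map (m : nat) (X : (nat -> R) -> Prop) (f : (nat -> R) -> nat -> R) : Prop :=
  forall i, (i < m)%nat -> convex_fun X (fun x => f x i).

Definition lneqI (I : nat -> Prop) (y y' : nat -> R) : Prop :=
  (forall i, I i -> y i <= y' i) /\ (exists j, I j /\ y j < y' j).

Definition ltI (I : nat -> Prop) (y y' : nat -> R) : Prop :=
  forall i, I i -> y i < y' i.

Definition Eff (h : (nat -> R) -> nat -> R) (I : nat -> Prop) (Z : (nat -> R) -> Prop)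
  (x : nat -> R) : Prop :=
  Z x /\ ~ (exists z, Z z /\ lneqI I (h z) (h x)).

Definition WEff (h : (nat -> R) -> nat -> R) (I : nat -> Prop) (Z : (nat -> R) -> Prop)
  (x : nat -> R) : Prop :=
  Z x /\ ~ (exists z, Z z /\ ltI I (h z) (h x)).

(* M = {1,...,m}, encoded as {0,...,m-1} *)
Definition fullM (m : nat) : nat -> Prop := fun i => (i < m)%nat.

(* A point strictly improving x on all of M improves it in the sense of
   lneqI on every nonempty I, so each E(f_I) lies in WE(f); this gives
   (alpha) => (beta), and E(f) <= WE(f) always.  Conversely, let x be weakly
   efficient but efficient for no nonempty I.  Starting from z = x, let I be
   the indices where f z is not yet strictly below f x and w a feasible point
   improving x on I: mixing a small weight of w into z keeps the strict
   coordinates strict, stays weakly below f x, and becomes strict at one more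
   index.  After at most m steps some point strictly improves x on all of M,
   a contradiction. *)
From Stdlib Require Import Reals Lra Lia Classical.
Open Scope R_scope.

Fixpoint count_upto (p : nat -> bool) (k : nat) : nat :=
  match k with
  | O => O
  | S k' => (count_upto p k' + if p k' then 1 else 0)%nat
  end.

Lemma count_upto_eq0 (p : nat -> bool) (k : nat) :
  count_upto p k = O -> forall i, (i < k)%nat -> p i = false.
Proof.
  induction k as [|k IH]; simpl; intros H i Hi; [lia|].
  destruct (Nat.eq_dec i k) as [->|Hik].
  - destruct (p k); [lia|reflexivity].
  - apply IH; lia.
Qed.

Lemma count_upto_pos (p : nat -> bool) (k : nat) :
  (0 < count_upto p k)%nat -> exists i, (i < k)%nat /\ p i = true.
Proof.
  induction k as [|k IH]; simpl; intros H; [lia|].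
  destruct (p k) eqn:Hpk.
  - exists k; split; [lia|exact Hpk].
  - destruct IH as [i [Hi Hpi]]; [lia|]. exists i; split; [lia|exact Hpi].
Qed.

Lemma count_upto_le (p q : nat -> bool) (k : nat) :
  (forall i, (i < k)%nat -> q i = true -> p i = true) ->
  (count_upto q k <= count_upto p k)%nat.
Proof.
  induction k as [|k IH]; simpl; intros Hqp; [lia|].
  specialize (IH (fun i Hi => Hqp i ltac:(lia))).
  specialize (Hqp k ltac:(lia)).
  destruct (q k), (p k); try lia.
Qed.

Lemma count_upto_lt (p q : nat -> bool) (k i0 : nat) :
  (forall i, (i < k)%nat -> q i = true -> p i = true) ->
  (i0 < k)%nat -> p i0 = true -> q i0 = false ->
  (count_upto q k < count_upto p k)%nat.
Proof.
  induction k as [|k IH]; simpl; intros Hqp Hi0 Hp Hq; [lia|].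
  pose proof (count_upto_le p q k (fun i Hi => Hqp i ltac:(lia))) as Hle.
  destruct (Nat.eq_dec i0 k) as [->|Hik].
  - rewrite Hp, Hq. lia.
  - specialize (IH (fun i Hi => Hqp i ltac:(lia)) ltac:(lia) Hp Hq).
    specialize (Hqp k ltac:(lia)).
    destruct (q k), (p k); lia.
Qed.

Lemma small_weight_keeps_lt (a b c : nat -> R) (k : nat) :
  exists t, 0 < t <= 1 /\
    forall j, (j < k)%nat -> b j < c j ->
      forall s, 0 < s <= t -> s * a j + (1 - s) * b j < c j.
Proof.
  induction k as [|k IH].
  - exists 1; split; [lra|]. intros; lia.
  - destruct IH as [t [Ht IH]].
    destruct (Rlt_dec (b k) (c k)) as [Hk|Hk]; [destruct (Rle_dec (a k) (b k)) as [Hab|Hab]|].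
    + exists t; split; [exact Ht|]. intros j Hj Hb s Hs.
      destruct (Nat.eq_dec j k) as [->|]; [nra|]. apply IH; [lia|exact Hb|exact Hs].
    + set (q := (c k - b k) / (2 * (a k - b k))).
      assert (Hq : q * (2 * (a k - b k)) = c k - b k) by (unfold q; field; lra).
      assert (Hq0 : 0 < q) by (unfold q; apply Rdiv_lt_0_compat; lra).
      pose proof (Rmin_l t q); pose proof (Rmin_r t q).
      exists (Rmin t q); split.
      { split; [apply Rmin_glb_lt; lra|lra]. }
      intros j Hj Hb s Hs.
      destruct (Nat.eq_dec j k) as [->|]; [nra|]. apply IH; [lia|exact Hb|lra].
    + exists t; split; [exact Ht|]. intros j Hj Hb s Hs.
      destruct (Nat.eq_dec j k) as [->|]; [tauto|]. apply IH; [lia|exact Hb|exact Hs].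
Qed.

Lemma convex_set_sublevels (X : (nat -> R) -> Prop) (g : nat -> (nat -> R) -> R) (l : nat) :
  convex_set X -> (forall k, (k < l)%nat -> convex_fun X (g k)) ->
  convex_set (fun x => X x /\ forall k, (k < l)%nat -> g k x <= 0).
Proof.
  intros HX Hg x y t [Hx Hgx] [Hy Hgy] Ht0 Ht1. split; [apply HX; assumption|].
  intros k Hk. pose proof (Hg k Hk x y t Hx Hy Ht0 Ht1).
  pose proof (Hgx k Hk). pose proof (Hgy k Hk). nra.
Qed.

Lemma convex_map_subset (m : nat) (X Y : (nat -> R) -> Prop) (f : (nat -> R) -> nat -> R) :
  (forall x, Y x -> X x) -> convex_map m X f -> convex_map m Y f.
Proof. intros HYX Hf i Hi x y t Hx Hy. apply (Hf i Hi); auto. Qed.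

Lemma Eff_WEff_sub (h : (nat -> R) -> nat -> R) (I J : nat -> Prop) (Z : (nat -> R) -> Prop) x :
  (forall i, I i -> J i) -> (exists i, I i) -> Eff h I Z x -> WEff h J Z x.
Proof.
  intros HIJ [i0 Hi0] [Hx HE]. split; [exact Hx|].
  intros [z [Hz Hlt]]. apply HE. exists z. split; [exact Hz|]. split.
  - intros i Hi. left. apply Hlt, HIJ, Hi.
  - exists i0. split; [exact Hi0|]. apply Hlt, HIJ, Hi0.
Qed.

Section StrictImprovement.

Variables (m : nat) (Z : (nat -> R) -> Prop) (f : (nat -> R) -> nat -> R) (x : nat -> R).
Hypothesis convex_Z : convex_set Z.
Hypothesis convex_f : convex_map m Z f.

Let weakly_below z := forall i, (i < m)%nat -> f z i <= f x i.
Let not_strict z i := ~ f z i < f x i.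

Lemma improve_one_more_index (z w : nat -> R) :
  Z z -> weakly_below z -> Z w ->
  lneqI (fun i => (i < m)%nat /\ not_strict z i) (f w) (f x) ->
  exists z', Z z' /\ weakly_below z' /\
    (forall i, (i < m)%nat -> f z i < f x i -> f z' i < f x i) /\
    exists i0, (i0 < m)%nat /\ not_strict z i0 /\ f z' i0 < f x i0.
Proof.
  intros Hz Hbelow Hw [Hw_le [i0 [[Hi0 Hns0] Hw_lt]]].
  destruct (small_weight_keeps_lt (f w) (f z) (f x) m) as [t [Ht Hsmall]].
  assert (Hz' : Z (comb t w z)) by (apply convex_Z; auto; lra).
  assert (Hconv : forall i, (i < m)%nat -> f (comb t w z) i <= t * f w i + (1 - t) * f z i)
    by (intros i Hi; apply (convex_f i Hi); auto; lra).
  exists (comb t w z). split; [exact Hz'|]. split; [|split].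
  - intros i Hi. pose proof (Hconv i Hi). pose proof (Hbelow i Hi).
    destruct (Rlt_dec (f z i) (f x i)) as [Hlt|Hns].
    + pose proof (Hsmall i Hi Hlt t ltac:(lra)). lra.
    + pose proof (Hw_le i (conj Hi Hns)). nra.
  - intros i Hi Hlt. pose proof (Hconv i Hi). pose proof (Hsmall i Hi Hlt t ltac:(lra)). lra.
  - exists i0. split; [exact Hi0|]. split; [exact Hns0|].
    pose proof (Hconv i0 Hi0). pose proof (Hbelow i0 Hi0). nra.
Qed.

Lemma strict_improvement_of_improvements :
  Z x ->
  (forall I : nat -> Prop, (forall i, I i -> (i < m)%nat) -> (exists i, I i) ->
     exists w, Z w /\ lneqI I (f w) (f x)) ->
  exists z, Z z /\ ltI (fullM m) (f z) (f x).
Proof.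
  intros Hx Himprove.
  set (nonstrict z i := if Rlt_dec (f z i) (f x i) then false else true).
  assert (Hnonstrict : forall z i, nonstrict z i = false <-> f z i < f x i).
  { intros z i. unfold nonstrict. destruct (Rlt_dec (f z i) (f x i)); split; congruence || tauto. }
  assert (Hdescent : forall N z, (count_upto (nonstrict z) m <= N)%nat -> Z z -> weakly_below z ->
                     exists z, Z z /\ ltI (fullM m) (f z) (f x)).
  { induction N as [|N IH]; intros z Hcount Hz Hbelow;
      (destruct (Nat.eq_dec (count_upto (nonstrict z) m) 0) as [H0|H0];
       [exists z; split; [exact Hz|];
        intros i Hi; apply Hnonstrict, (count_upto_eq0 _ m H0 i Hi)|]).
    { lia. }
    destruct (Himprove (fun i => (i < m)%nat /\ not_strict z i)) as [w [Hw Hlneq]].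
    { intros i [Hi _]; exact Hi. }
    { destruct (count_upto_pos (nonstrict z) m) as [i [Hi Hns]]; [lia|].
      exists i. split; [exact Hi|]. intros Hlt. apply Hnonstrict in Hlt. congruence. }
    destruct (improve_one_more_index z w Hz Hbelow Hw Hlneq)
      as [z' [Hz' [Hbelow' [Hkeep [i0 [Hi0 [Hns0 Hlt0]]]]]]].
    apply (IH z'); [|exact Hz'|exact Hbelow'].
    enough (count_upto (nonstrict z') m < count_upto (nonstrict z) m)%nat by lia.
    apply (count_upto_lt _ _ m i0); [|exact Hi0| |apply Hnonstrict, Hlt0].
    - intros i Hi Hz'i. destruct (nonstrict z i) eqn:Hzi; [reflexivity|].
      apply Hnonstrict, Hkeep in Hzi; [|exact Hi]. apply Hnonstrict in Hzi. congruence.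
    - destruct (nonstrict z i0) eqn:Hzi0; [reflexivity|]. apply Hnonstrict in Hzi0. contradiction. }
  apply (Hdescent _ x (le_n _) Hx). intros i _. lra.
Qed.

Lemma WEff_Eff_some_index :
  WEff f (fullM m) Z x ->
  exists I : nat -> Prop, (forall i, I i -> (i < m)%nat) /\ (exists i, I i) /\ Eff f I Z x.
Proof.
  intros [Hx Hweak]. apply NNPP. intros Hnone. apply Hweak.
  apply strict_improvement_of_improvements; [exact Hx|].
  intros I HIm HI. apply NNPP. intros Hno. apply Hnone. exists I.
  split; [exact HIm|]. split; [exact HI|]. split; [exact Hx|].
  intros [w [Hw Hlneq]]. apply Hno. exists w. split; assumption.
Qed.

End StrictImprovement.

Theorem WEff_eq_Eff_iff_Eff_sub (m : nat) (Z : (nat -> R) -> Prop) (f : (nat -> R) -> nat -> R) :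
  (1 <= m)%nat -> convex_set Z -> convex_map m Z f ->
  ((forall x, WEff f (fullM m) Z x <-> Eff f (fullM m) Z x) <->
   (forall (I : nat -> Prop) x,
      (forall i, I i -> (i < m)%nat) -> (exists i, I i) ->
      Eff f I Z x -> Eff f (fullM m) Z x)).
Proof.
  intros Hm HZ Hf. split.
  - intros Hweak I x HIm HI HE. apply Hweak. exact (Eff_WEff_sub f I (fullM m) Z x HIm HI HE).
  - intros Hsub x. split.
    + intros HW. destruct (WEff_Eff_some_index m Z f x HZ Hf HW) as [I [HIm [HI HE]]].
      exact (Hsub I x HIm HI HE).
    + apply Eff_WEff_sub; [tauto|]. exists O. unfold fullM. lia.
Qed.

Theorem corollary6p3 (n m l : nat)
  (X : (nat -> R) -> Prop) (f : (nat -> R) -> nat -> R) (g : nat -> (nat -> R) -> R) :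
  (1 <= m)%nat -> (1 <= l)%nat ->
  (forall x, X x -> in_Rn n x) ->
  convex_set X ->
  convex_map m X f ->
  (forall k, (k < l)%nat -> convex_fun X (g k)) ->
  let Omega := fun x => X x /\ (forall k, (k < l)%nat -> g k x <= 0) in
  ((forall x, WEff f (fullM m) Omega x <-> Eff f (fullM m) Omega x) <->
   (forall (I : nat -> Prop) x,
      (forall i, I i -> (i < m)%nat) -> (exists i, I i) ->
      Eff f I Omega x -> Eff f (fullM m) Omega x)).
Proof.
  intros Hm _ _ HX Hf Hg Omega.
  apply WEff_eq_Eff_iff_Eff_sub; [exact Hm|apply convex_set_sublevels; assumption|].
  apply (convex_map_subset m X); [|exact Hf].
  intros x [Hx _]. exact Hx.
Qed.
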